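(* Let $(J,S)$ be an irreducible and ergodic homogeneous $d$-dimensional multi-time Markov renewal chain, and let $\nu$ be the stationary distribution of the embedded chain $J$. Then for all $j\in E$ and $1\le u\le d$, $$\mu^{(u,u)}_{jj}=\frac{\sum_{i=1}^s\nu_i m^{[u,u]}_i}{\nu_j}+2\,\frac{\sum_{i=1}^s\sum_{r\ne j}\nu_i p_{ir}m^{[u]}_{ir}\mu^{(u)}_{rj}}{\nu_j}.$$
   Context: $E=\{1,\dots,s\}$; $\mathbb{N}^d$ has the componentwise partial order, $k<l$ meaning $k\le l$, $k\ne l$. A homogeneous $d$-dimensional multi-time Markov renewal chain is a process $(J_n,S_n)_{n\in\mathbb{N}}$, $J_n\in E$, $S_n=(S^{[1]}_n,\dots,S^{[d]}_n)\in\mathbb{N}^d$, $S_0=0_d$, $S_n<S_{n+1}$, with a.s. $\mathbb{P}(J_{n+1}=j,S_{n+1}-S_n=k\mid J_{0:n},S_{0:n})=q_{J_nj}(k)$, $q_{ij}(k)=\mathbb{P}(J_{n+1}=j,S_{n+1}-S_n=k\mid J_n=i)$ independent of $n$. $X_{n+1}=S_{n+1}-S_n$, coordinates $X^{[u]}_{n+1}$. $p_{ij}=\sum_kq_{ij}(k)$. $\mathbb{E}_i$: expectation given $J_0=i$. $m^{[u,u]}_i=\mathbb{E}[(X^{[u]}_{n+1})^2\mid J_n=i]$, $m^{[u]}_{ir}=\mathbb{E}[X^{[u]}_{n+1}\mid J_n=i,J_{n+1}=r]$. With $m_j=\min\{l\ge1:J_l=j\}$ and $T^{[u]}_j=S^{[u]}_{m_j}$: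 $\mu^{(u)}_{ij}=\mathbb{E}_i[T^{[u]}_j]$, $\mu^{(u,u)}_{ij}=\mathbb{E}_i[(T^{[u]}_j)^2]$. Irreducible: $J$ irreducible. Ergodic: for each $u$, the marginal one-dimensional-time Markov renewal chain $(J,S^{[u]})$ (kernel $q^{[u]}_{ij}(k)=\sum_{k_{1:d}:k_u=k}q_{ij}(k_{1:d})$) is positive recurrent (all return times $T^{[u]}_j$ a.s. finite with finite mean) and aperiodic (each return time distribution has period $1$). *)

From HB Require Import structures.
From mathcomp Require Import all_boot all_order all_algebra.
From mathcomp Require Import all_classical all_reals all_analysis.
Set Implicit Arguments. Unset Strict Implicit. Unset Printing Implicit Defensive.
Import Order.TTheory GRing.Theory Num.Theory.
Local Open Scope classical_set_scope.
Local Open Scope ring_scope.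

(* State space E = {1,..,s} is rendered as 'I_s (0-based).  Times in N^d are
   finite functions 'I_d -> nat; the coordinate u (1 <= u <= d) is u : 'I_d.
   A homogeneous d-dimensional multi-time Markov renewal chain is given by its
   semi-Markov kernel q i j k = P(J_{n+1}=j, X_{n+1}=k | J_n=i); its law
   (for each initial state) is entirely determined by q. *)
Definition time (d : nat) := {ffun 'I_d -> nat}.

Section MRC.
Context {R : realType} {s d : nat}.
Variable q : 'I_s -> 'I_s -> time d -> R.
Local Open Scope ereal_scope.

(* q is a semi-Markov kernel with strictly increasing jumps (S_n < S_{n+1}) *)
Definition is_kernel :=
  (forall i j k, (0 <= q i j k)%R) /\
  (forall i j, q i j [ffun=> 0%N] = 0%R) /\
  (forall i, \sum_(j < s) (\esum_(k in [set: time d]) (q i j k)%:E) = 1).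

Definition ptrans (i j : 'I_s) : \bar R := \esum_(k in [set: time d]) (q i j k)%:E.

Fixpoint pn (n : nat) (i j : 'I_s) : \bar R :=
  if n is n'.+1 then \sum_(r < s) ptrans i r * pn n' r j
  else (i == j)%:R%:E.

Definition irreducible := forall i j : 'I_s, exists n, 0 < pn n i j.

Definition stationary (nu : 'I_s -> R) :=
  (forall i, (0 <= nu i)%R) /\ (\sum_(i < s) nu i)%R = 1%R /\
  (forall j, \sum_(i < s) (nu i)%:E * ptrans i j = (nu j)%:E).

Definition qmarg (u : 'I_d) (i j : 'I_s) (t : nat) : \bar R :=
  \esum_(k in [set k : time d | k u = t]) (q i j k)%:E.

(* fpass u n i j t = P_i(m_j = n+1, S^{[u]}_{n+1} = t) *)
Fixpoint fpass (u : 'I_d) (n : nat) (i j : 'I_s) (t : nat) : \bar R :=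
  if n is n'.+1 then
    \sum_(r < s | r != j) \sum_(t' < t.+1) qmarg u i r t' * fpass u n' r j (t - t')
  else qmarg u i j t.

(* P_i(T^{[u]}_j = t), for t in N *)
Definition retdist (u : 'I_d) (i j : 'I_s) (t : nat) : \bar R :=
  \sum_(n <oo) fpass u n i j t.

Definition retfin (u : 'I_d) (i j : 'I_s) : \bar R := \sum_(t <oo) retdist u i j t.

(* mu^{(u)}_{ij} = E_i[T^{[u]}_j]  (= +oo if T^{[u]}_j = oo with positive probability) *)
Definition mu1 (u : 'I_d) (i j : 'I_s) : \bar R :=
  if retfin u i j == 1 then \sum_(t <oo) (t%:R)%:E * retdist u i j t else +oo.

Definition mu2 (u : 'I_d) (i j : 'I_s) : \bar R :=
  if retfin u i j == 1 then \sum_(t <oo) ((t ^ 2)%N%:R)%:E * retdist u i j t else +oo.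

Definition aperiodic_ret (u : 'I_d) (j : 'I_s) :=
  forall p : nat, (forall t : nat, 0 < retdist u j j t -> (p %| t)%N) -> p = 1%N.

(* ergodic: every marginal chain (J, S^{[u]}) positive recurrent and aperiodic *)
Definition ergodic :=
  forall (u : 'I_d) (j : 'I_s),
    retfin u j j = 1 /\ mu1 u j j < +oo /\ aperiodic_ret u j.

Definition m2 (u : 'I_d) (i : 'I_s) : \bar R :=
  \sum_(j < s) \esum_(k in [set: time d]) (q i j k)%:E * (((k u) ^ 2)%N%:R)%:E.

(* m^{[u]}_{ir} = E[X^{[u]}_{n+1} | J_n = i, J_{n+1} = r]  (set to 0 when p_ir = 0,
   where it is undefined; it only appears multiplied by p_ir) *)
Definition m1 (u : 'I_d) (i r : 'I_s) : \bar R :=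
  if ptrans i r == 0 then 0
  else (\esum_(k in [set: time d]) (q i r k)%:E * ((k u)%:R)%:E) * (fine (ptrans i r))^-1%:E.

End MRC.

From HB Require Import structures.
From mathcomp Require Import all_boot all_order all_algebra.
From mathcomp Require Import all_classical all_reals all_analysis.
From mathcomp Require Import lra.
Import Order.TTheory GRing.Theory Num.Theory.
Local Open Scope classical_set_scope.
Local Open Scope ring_scope.
Local Open Scope ereal_scope.

(* First-step analysis of the return time T = T^{[u]}_j.  Started from i, T is the first
   jump X^{[u]}_1 when J_1 = j, and X^{[u]}_1 plus an independent copy of the return time from r
   when J_1 = r <> j.  Expanding the moments of this sum binomially gives, for
   M_k(i) = E_i[T^k; T < oo],
     M_0(i) = p_ij + sum_{r<>j} p_ir M_0(r),
     M_2(i) = b(i) + sum_{r<>j} p_ir M_2(r),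
              b(i) = m^{[u,u]}_i + 2 sum_{r<>j} p_ir m^{[u]}_ir M_1(r),
   the second once M_0 = 1 is known, which follows from M_0 <= 1, M_0(j) = 1 and
   irreducibility.  Multiplying the second equation by nu_i and summing over i, stationarity
   cancels the terms r <> j and leaves nu_j M_2(j) = sum_i nu_i b(i).  The cancellation needs
   M_2 < oo: if sum_i nu_i b(i) < oo this follows from the same computation on the truncations of
   M_2 to the first N excursion steps; otherwise both sides are infinite. *)

Section nonnegative_series.
Context {R : realType}.
Implicit Types (f g : nat -> \bar R) (c : \bar R).

Lemma ge0_nneseriesZl f c : 0 <= c -> (forall t, 0 <= f t) ->
  \sum_(t <oo) (c * f t) = c * \sum_(t <oo) f t.
Proof.
case: c => [r| |] // c0 f0; first by rewrite nneseriesZl.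
have [[t ft]|nf] := pselect (exists t, 0 < f t).
  have ft_le : f t <= \sum_(t <oo) f t.
    apply: le_trans (nneseries_lim_ge (m := 0%N) t.+1 _) => //.
    by rewrite big_nat_recr //= leeDr // sume_ge0.
  rewrite gt0_mulye; last exact: lt_le_trans ft ft_le.
  apply: (nneseries_pinfty _ _ (k := t)) => // [n _|]; first by rewrite mule_ge0.
  by rewrite gt0_mulye.
have f_eq0 t : f t = 0.
  by apply/eqP; rewrite eq_le f0 andbT leNgt; apply/negP => ft; apply: nf; exists t.
by rewrite !eseries0 ?mule0 // => t _ _; rewrite f_eq0 ?mule0.
Qed.

Lemma ge0_nneseries_mul f g : (forall t, 0 <= f t) -> (forall t, 0 <= g t) ->
  \sum_(t <oo) \sum_(t' <oo) (f t * g t') = (\sum_(t <oo) f t) * (\sum_(t <oo) g t).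
Proof.
move=> f0 g0; rewrite muleC -ge0_nneseriesZl ?nneseries_ge0 //.
by apply: eq_eseriesr => t _; rewrite ge0_nneseriesZl // muleC.
Qed.

Lemma nneseries_antidiagonal (G : nat -> nat -> \bar R) : (forall a b, 0 <= G a b) ->
  \sum_(t <oo) \sum_(t' < t.+1) G t' (t - t')%N =
  \sum_(t <oo) \sum_(t' <oo) G t t'.
Proof.
move=> G0; pose H t t' := if (t' <= t)%N then G t' (t - t')%N else 0.
have H0 t t' : 0 <= H t t' by rewrite /H; case: ifP.
transitivity (\sum_(t <oo) \sum_(t' <oo) H t t').
  apply: eq_eseriesr => t _; rewrite (nneseries_split 0 t.+1) // eseries0 ?adde0.
    by rewrite big_mkord; apply: eq_bigr => -[t' /= ?] _; rewrite /H -ltnS ifT.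
  by move=> t'; rewrite add0n => lt_t_t' _; rewrite /H leqNgt lt_t_t'.
rewrite nneseries_interchange //; apply: eq_eseriesr => t _.
rewrite (nneseries_split 0 t) // add0n big_mkord big1 ?add0e => [|t' _]; last first.
  by rewrite /H leqNgt ltn_ord.
by rewrite -nneseries_addn //; apply: eq_eseriesr => t' _; rewrite /H leq_addl addnK.
Qed.

Lemma lee_sum_term {I : finType} {P : pred I} {f : I -> \bar R} r :
  (forall x, P x -> 0 <= f x) -> P r -> f r <= \sum_(x | P x) f x.
Proof. by move=> f0 Pr; rewrite (bigD1 r) //= leeDl // sume_ge0 // => x /andP[/f0]. Qed.

Lemma nneseries_ub (f : nat -> \bar R) (x : \bar R) : (forall n, 0 <= f n) ->
  (forall N, \sum_(0 <= n < N) f n <= x) -> \sum_(n <oo) f n <= x.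
Proof.
move=> f0 f_ub; apply: lime_le; first by apply: is_cvg_nneseries => n _ _; exact: f0.
exact: nearW.
Qed.

Lemma esumZl (T : choiceType) (S : set T) (a : T -> \bar R) (r : R) :
  (0 <= r)%R -> (forall x, 0 <= a x) ->
  \esum_(x in S) (r%:E * a x) = r%:E * \esum_(x in S) a x.
Proof.
move=> r0 a0; rewrite /esum -ereal_supZl //; last first.
  by apply/set0P; exists 0, set0; [exact: fsets_set0 | rewrite fsbig_set0].
congr ereal_sup; rewrite image_comp; apply: eq_imagel => A [finA _] /=.
by rewrite !fsbig_finite // ge0_sume_distrr.
Qed.

End nonnegative_series.

Section moments.
Context {R : realType}.
Implicit Types (a b : nat -> \bar R).

Definition moment (k : nat) a := \sum_(t <oo) ((t ^ k)%:R)%:E * a t.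

Definition econv a b (t : nat) := \sum_(t' < t.+1) a t' * b (t - t')%N.

Lemma moment_ge0 k a : (forall t, 0 <= a t) -> 0 <= moment k a.
Proof. by move=> a0; apply: nneseries_ge0 => t _ _; rewrite mule_ge0 ?lee_fin. Qed.

Lemma econv_ge0 a b t : (forall t, 0 <= a t) -> (forall t, 0 <= b t) ->
  0 <= econv a b t.
Proof. by move=> a0 b0; apply: sume_ge0 => t' _; rewrite mule_ge0. Qed.

Lemma moment_sum k (I : finType) (P : pred I) (a : I -> nat -> \bar R) :
  (forall r t, 0 <= a r t) ->
  moment k (fun t => \sum_(r | P r) a r t) = \sum_(r | P r) moment k (a r).
Proof.
move=> a0; rewrite /moment; under eq_eseriesr => t _ do rewrite ge0_sume_distrr //.
by rewrite nneseries_sum // => r t _; rewrite mule_ge0 ?lee_fin.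
Qed.

Lemma moment_econv k a b : (forall t, 0 <= a t) -> (forall t, 0 <= b t) ->
  moment k (econv a b) =
  \sum_(l < k.+1) ('C(k, l)%:R)%:E * (moment (k - l) a * moment l b).
Proof.
move=> a0 b0; have ab0 t t' : 0 <= a t * b t' by rewrite mule_ge0.
transitivity (\sum_(t <oo) \sum_(t' <oo) (((t + t') ^ k)%:R)%:E * (a t * b t')).
  rewrite -nneseries_antidiagonal => [|t t']; last by rewrite mule_ge0 ?lee_fin.
  apply: eq_eseriesr => t _; rewrite ge0_sume_distrr //.
  by apply: eq_bigr => t' _; rewrite subnKC // -ltnS.
pose c l t t' := ('C(k, l)%:R)%:E * (((t ^ (k - l))%:R)%:E * a t * (((t' ^ l)%:R)%:E * b t')).
have c0 l t t' : 0 <= c l t t' by rewrite !mule_ge0 ?lee_fin.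
transitivity (\sum_(t <oo) \sum_(t' <oo) \sum_(l < k.+1) c l t t').
  apply: eq_eseriesr => t _; apply: eq_eseriesr => t' _.
  rewrite expnDn natr_sum -sumEFin ge0_sume_distrl => [|l _]; last by rewrite lee_fin.
  apply: eq_bigr => l _; rewrite /c !natrM !EFinM -!muleA.
  by congr (_ * (_ * _)); rewrite muleCA.
under eq_eseriesr => t _ do rewrite nneseries_sum //.
rewrite nneseries_sum => [|l t _]; last by rewrite nneseries_ge0.
have f0 l t : 0 <= ((t ^ l)%:R)%:E * a t by rewrite mule_ge0 ?lee_fin.
have g0 l t : 0 <= ((t ^ l)%:R)%:E * b t by rewrite mule_ge0 ?lee_fin.
apply: eq_bigr => l _; rewrite /moment -ge0_nneseries_mul //.
rewrite -nneseriesZl => [|t _]; last by apply: nneseries_ge0 => t' _ _; rewrite mule_ge0.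
by apply: eq_eseriesr => t _; rewrite -nneseriesZl // => t' _; rewrite mule_ge0.
Qed.

End moments.

Section first_passage.
Context {R : realType} {s d : nat} (q : 'I_s -> 'I_s -> time d -> R).
Context (u : 'I_d) (j : 'I_s).
Hypothesis q_ge0 : forall i r k, (0 <= q i r k)%R.

(* [step_moment k i r] is E_i[(X^{[u]}_1)^k; J_1 = r].  With T = T^{[u]}_j,
   [passage_moment k n i] is E_i[T^k; m_j = n+1], [return_moment k i] is E_i[T^k; T < oo]
   and [return_moment_upto k N i] is E_i[T^k; m_j <= N]. *)
Definition step_moment k i r := moment k (qmarg q u i r).

Definition passage_moment k n i := moment k (fun t => fpass q u n i j t).

Definition return_moment k i := \sum_(n <oo) passage_moment k n i.

Definition return_moment_upto k N i := \sum_(0 <= n < N) passage_moment k n i.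

(* k-th moment of X^{[u]}_1 + T' on {J_1 <> j}, where T' is the return time from J_1 and
   [x l r] the l-th moment of T' started from r. *)
Definition first_step k (x : nat -> 'I_s -> \bar R) i :=
  \sum_(r < s | r != j) \sum_(l < k.+1)
    ('C(k, l)%:R)%:E * step_moment (k - l) i r * x l r.

Lemma qmarg_ge0 i r t : 0 <= qmarg q u i r t.
Proof. by apply: esum_ge0 => k _; rewrite lee_fin. Qed.

Lemma fpass_ge0 n i t : 0 <= fpass q u n i j t.
Proof.
elim: n i t => [|n IHn] i t /=; first exact: qmarg_ge0.
by apply: sume_ge0 => r _; apply: econv_ge0 => t'; [exact: qmarg_ge0 | exact: IHn].
Qed.

Lemma step_moment_ge0 k i r : 0 <= step_moment k i r.
Proof. by apply: moment_ge0 => t; exact: qmarg_ge0. Qed.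

Lemma passage_moment_ge0 k n i : 0 <= passage_moment k n i.
Proof. by apply: moment_ge0 => t; exact: fpass_ge0. Qed.

Lemma return_moment_ge0 k i : 0 <= return_moment k i.
Proof. by apply: nneseries_ge0 => n _ _; exact: passage_moment_ge0. Qed.

Lemma passage_momentS k n i :
  passage_moment k n.+1 i = first_step k (passage_moment^~ n) i.
Proof.
have fpass_conv_ge0 r t : 0 <= econv (qmarg q u i r) (fun t => fpass q u n r j t) t.
  by apply: econv_ge0 => t'; [exact: qmarg_ge0 | exact: fpass_ge0].
rewrite /passage_moment moment_sum //; apply: eq_bigr => r _.
rewrite moment_econv => [|t|t]; [| exact: qmarg_ge0 | exact: fpass_ge0].
by apply: eq_bigr => l _; rewrite muleA.
Qed.

Lemma first_step_nneseries k (x : nat -> nat -> 'I_s -> \bar R) i :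
  (forall n l r, 0 <= x n l r) ->
  \sum_(n <oo) first_step k (x n) i = first_step k (fun l r => \sum_(n <oo) x n l r) i.
Proof.
move=> x0; have c0 l r : 0 <= ('C(k, l)%:R)%:E * step_moment (k - l) i r.
  by rewrite mule_ge0 ?lee_fin ?step_moment_ge0.
rewrite nneseries_sum => [|r n _]; last first.
  by apply: sume_ge0 => l _; rewrite mule_ge0.
apply: eq_bigr => r _; rewrite nneseries_sum => [|l n _]; last by rewrite mule_ge0.
by apply: eq_bigr => l _; rewrite ge0_nneseriesZl.
Qed.

Lemma first_step_sum k (x : nat -> nat -> 'I_s -> \bar R) N i :
  (forall n l r, 0 <= x n l r) ->
  \sum_(0 <= n < N) first_step k (x n) i =
  first_step k (fun l r => \sum_(0 <= n < N) x n l r) i.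
Proof.
move=> x0; rewrite exchange_big; apply: eq_bigr => r _.
rewrite exchange_big; apply: eq_bigr => l _.
by rewrite ge0_sume_distrr // mule_ge0 ?lee_fin ?step_moment_ge0.
Qed.

Lemma first_step0 x i :
  first_step 0 x i = \sum_(r < s | r != j) step_moment 0 i r * x 0%N r.
Proof. by apply: eq_bigr => r _; rewrite big_ord1 mul1e. Qed.

Lemma first_step2 x i : first_step 2 x i = \sum_(r < s | r != j)
  (step_moment 2 i r * x 0%N r + 2%:E * step_moment 1 i r * x 1%N r
   + step_moment 0 i r * x 2%N r).
Proof. by apply: eq_bigr => r _; rewrite !big_ord_recl big_ord0 adde0 /= !mul1e addeA. Qed.

Lemma return_momentE k i :
  return_moment k i = step_moment k i j + first_step k return_moment i.
Proof.
rewrite /return_moment nneseries_recl => // [|n _]; last exact: passage_moment_ge0.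
congr (_ + _); rewrite -first_step_nneseries => [|n l r]; last first.
  exact: passage_moment_ge0.
rewrite -nneseries_addn => [|n]; last exact: passage_moment_ge0.
by apply: eq_eseriesr => n _; rewrite addn1 passage_momentS.
Qed.

Lemma return_moment_uptoS k N i :
  return_moment_upto k N.+1 i = step_moment k i j + first_step k (return_moment_upto^~ N) i.
Proof.
rewrite /return_moment_upto big_nat_recl //; congr (_ + _).
under eq_bigr => n _ do rewrite passage_momentS.
by rewrite first_step_sum // => n l r; exact: passage_moment_ge0.
Qed.

Lemma moment_retdist k i : moment k (retdist q u i j) = return_moment k i.
Proof.
rewrite /moment /retdist.
transitivity (\sum_(t <oo) \sum_(n <oo) ((t ^ k)%:R)%:E * fpass q u n i j t).
  by apply: eq_eseriesr => t _; rewrite ge0_nneseriesZl ?lee_fin // => n; exact: fpass_ge0.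
by rewrite nneseries_interchange // => t n; rewrite mule_ge0 ?lee_fin ?fpass_ge0.
Qed.

Lemma step_moment_esum k i r :
  step_moment k i r = \esum_(x in [set: time d]) (q i r x)%:E * (((x u) ^ k)%:R)%:E.
Proof.
have -> : [set: time d] = \bigcup_t [set x : time d | x u = t].
  by apply/seteqP; split => x // _; exists (x u).
rewrite nneseries_sum_bigcup => [|m n _ _ [x [/= <- <-]] //|x]; last first.
  by rewrite mule_ge0 ?lee_fin.
apply: eq_eseriesr => t _; rewrite -esumZl ?lee_fin // => [|x]; last by rewrite lee_fin.
by apply: eq_esum => x /= <-; rewrite muleC.
Qed.

End first_passage.

Section irreducible_chain.
Context {R : realType} {s d : nat} {q : 'I_s -> 'I_s -> time d -> R} {nu : 'I_s -> R}.
Hypotheses (hq : is_kernel q) (hirr : irreducible q) (hnu : stationary q nu).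
Local Notation p := (ptrans q).

Let q_ge0 : forall i r k, (0 <= q i r k)%R := hq.1.

Lemma ptrans_ge0 i r : 0 <= p i r.
Proof. by apply: esum_ge0 => k _; rewrite lee_fin. Qed.

Lemma ptrans_sum1 i : \sum_(r < s) p i r = 1.
Proof. exact: hq.2.2. Qed.

Lemma ptrans_fin i r : p i r \is a fin_num.
Proof.
rewrite ge0_fin_numE ?ptrans_ge0 // (@le_lt_trans _ _ 1) ?ltey //.
by rewrite -(ptrans_sum1 i) (lee_sum_term r) // => r' _; exact: ptrans_ge0.
Qed.

Lemma pn_ge0 n i r : 0 <= pn q n i r.
Proof.
elim: n i => [|n IHn] i /=; first by rewrite lee_fin ler0n.
by apply: sume_ge0 => k _; rewrite mule_ge0 ?ptrans_ge0.
Qed.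

Lemma stationary_ge0 i : 0 <= (nu i)%:E.
Proof. by rewrite lee_fin hnu.1. Qed.

Lemma irreducible_taboo_ind (j : 'I_s) (P : pred 'I_s) : P j ->
  (forall i r, P i -> r != j -> 0 < p i r -> P r) -> forall r, P r.
Proof.
move=> Pj P_step r; have [n pn_gt0] := hirr j r.
suff path_ind : forall n i, P i -> 0 < pn q n i r -> P r by exact: path_ind n j Pj pn_gt0.
move=> {n pn_gt0}; elim=> [|n IHn] i Pi /=; first by case: eqP => [<-|_]; rewrite ?ltxx.
move=> pn_gt0; have [k pik_gt0 pnk_gt0] : exists2 k, 0 < p i k & 0 < pn q n k r.
  apply: contrapT => no_pos; move: pn_gt0; apply/negP; rewrite -leNgt.
  apply: sume_le0 => k _; rewrite leNgt; apply/negP => prod_gt0; apply: no_pos.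
  exists k; rewrite lt0e ?ptrans_ge0 ?pn_ge0 andbT; apply/negP => /eqP e;
    by move: prod_gt0; rewrite e ?mul0e ?mule0 ltxx.
have [kj | kj] := eqVneq k j; first by apply: IHn pnk_gt0; rewrite kj.
by apply: IHn pnk_gt0; exact: P_step pik_gt0.
Qed.

Lemma stationary_sum (P : pred 'I_s) (g : 'I_s -> \bar R) : (forall r, 0 <= g r) ->
  \sum_(i < s) (nu i)%:E * \sum_(r < s | P r) p i r * g r =
  \sum_(r < s | P r) (nu r)%:E * g r.
Proof.
move=> g0; have distr i : (nu i)%:E * \sum_(r < s | P r) p i r * g r =
    \sum_(r < s | P r) (nu i)%:E * (p i r * g r).
  by rewrite ge0_sume_distrr // => r _; rewrite mule_ge0 ?ptrans_ge0.
under eq_bigr => i _ do rewrite distr.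
rewrite exchange_big /=; apply: eq_bigr => r _.
under eq_bigr => i _ do rewrite muleA.
by rewrite -ge0_sume_distrl ?hnu.2.2 // => i _; rewrite mule_ge0 ?ptrans_ge0 ?stationary_ge0.
Qed.

Lemma stationary_pn n r : \sum_(i < s) (nu i)%:E * pn q n i r = (nu r)%:E.
Proof.
elim: n r => [|n IHn] r /=; last by rewrite stationary_sum // => k; exact: pn_ge0.
by rewrite (bigD1 r) //= eqxx mule1 big1 ?adde0 // => i /negbTE ->; rewrite mule0.
Qed.

Lemma stationary_gt0 r : (0 < nu r)%R.
Proof.
have [k nuk_gt0] : exists k, (0 < nu k)%R.
  apply: contrapT => no_pos; suff : (\sum_(i < s) nu i <= 0)%R by rewrite hnu.2.1 ler10.
  apply: sumr_le0 => i _; rewrite leNgt; apply/negP => nui_gt0.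
  by apply: no_pos; exists i.
have [n pn_gt0] := hirr k r; rewrite -lte_fin -(stationary_pn n r).
apply: lt_le_trans (lee_sum_term k _ isT); first by rewrite mule_gt0.
by move=> i _; rewrite mule_ge0 ?stationary_ge0 ?pn_ge0.
Qed.

Lemma taboo_harmonic_eq1 (j : 'I_s) (h : 'I_s -> \bar R) :
  (forall i, 0 <= h i) -> (forall i, h i <= 1) -> h j = 1 ->
  (forall i, h i = p i j + \sum_(r < s | r != j) p i r * h r) ->
  forall i, h i = 1.
Proof.
move=> h_ge0 h_le1 hj h_eq i; apply/eqP; move: i.
(* h i = 1 forces equality in h i <= p_ij + sum_{r<>j} p_ir = 1, termwise. *)
apply: (irreducible_taboo_ind j (fun i => h i == 1)); first by rewrite hj.
move=> i r /eqP hi rj pir_gt0.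
pose hr x := fine (h x); pose pr x y := fine (p x y).
have hE x : h x = (hr x)%:E.
  by rewrite fineK // ge0_fin_numE // (le_lt_trans (h_le1 x)) ?ltey.
have pE x y : p x y = (pr x y)%:E by rewrite fineK // ptrans_fin.
have hsum : (1 = pr i j + \sum_(r' < s | r' != j) pr i r' * hr r')%R.
  have := h_eq i; rewrite hi pE.
  under eq_bigr => r' _ do rewrite pE hE -EFinM.
  by rewrite sumEFin -EFinD => -[].
have psum : (1 = pr i j + \sum_(r' < s | r' != j) pr i r')%R.
  have := ptrans_sum1 i; rewrite (bigD1 j) //= pE.
  under eq_bigr => r' _ do rewrite pE.
  by rewrite sumEFin -EFinD => -[].
have defect0 : (\sum_(r' < s | r' != j) pr i r' * (1 - hr r') = 0)%R.
  under eq_bigr => r' _ do rewrite mulrBr mulr1.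
  rewrite sumrB; lra.
have defect_ge0 r' : (0 <= pr i r' * (1 - hr r'))%R.
  rewrite mulr_ge0 ?fine_ge0 ?ptrans_ge0 // subr_ge0.
  by rewrite -lee_fin -hE.
move: (psumr_eq0P (fun r' _ => defect_ge0 r') defect0 rj) => /eqP.
rewrite mulf_eq0 subr_eq0 => /orP[/eqP pr0 | /eqP hr1]; last by rewrite hE -hr1.
by move: pir_gt0; rewrite pE pr0 ltxx.
Qed.

Section taboo_equation.
Variables (j : 'I_s) (b : 'I_s -> \bar R) (f : nat -> 'I_s -> \bar R).
Hypotheses (b_ge0 : forall i, 0 <= b i) (f_ge0 : forall n i, 0 <= f n i).
Hypothesis series_eq : forall i,
  \sum_(n <oo) f n i = b i + \sum_(r < s | r != j) p i r * \sum_(n <oo) f n r.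
Hypothesis partial_le : forall N i,
  \sum_(0 <= n < N.+1) f n i <= b i + \sum_(r < s | r != j) p i r * \sum_(0 <= n < N) f n r.

Local Notation B := (\sum_(i < s) (nu i)%:E * b i).

Lemma taboo_source_fin : B < +oo -> forall i, b i \is a fin_num.
Proof.
move=> B_fin i; rewrite ge0_fin_numE // ltey; apply: contraTneq B_fin => bi.
have := lee_sum_term i (fun i _ => mule_ge0 (stationary_ge0 i) (b_ge0 i)) isT.
by rewrite bi gt0_muley ?lte_fin ?stationary_gt0 // leye_eq => /eqP ->.
Qed.

Lemma taboo_partial_fin : B < +oo -> forall N i, \sum_(0 <= n < N) f n i \is a fin_num.
Proof.
move=> B_fin; elim=> [|N IHN] i; first by rewrite big_geq.
rewrite ge0_fin_numE ?sume_ge0 //; apply: le_lt_trans (partial_le N i) _.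
rewrite -ge0_fin_numE ?adde_ge0 ?sume_ge0 // => [|r _]; last first.
  by rewrite mule_ge0 ?ptrans_ge0 ?sume_ge0.
rewrite fin_numD taboo_source_fin //=; apply/sum_fin_numP => r _ _.
by rewrite fin_numM ?ptrans_fin ?IHN.
Qed.

Lemma taboo_partial_ub : B < +oo -> forall N, (nu j)%:E * \sum_(0 <= n < N) f n j <= B.
Proof.
move=> B_fin; have partial_fin := taboo_partial_fin B_fin.
case=> [|N].
  by rewrite big_geq // mule0 sume_ge0 // => i _; rewrite mule_ge0 ?stationary_ge0.
have step : \sum_(i < s) (nu i)%:E * \sum_(0 <= n < N.+1) f n i <=
            B + \sum_(r < s | r != j) (nu r)%:E * \sum_(0 <= n < N) f n r.
  rewrite -(stationary_sum (fun r => r != j)) => [|r]; last by rewrite sume_ge0.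
  rewrite -big_split /=; apply: lee_sum => i _.
  rewrite -ge0_muleDr ?sume_ge0 // => [|r _]; last first.
    by rewrite mule_ge0 ?ptrans_ge0 ?sume_ge0.
  by rewrite lee_wpmul2l ?stationary_ge0.
have mono : \sum_(r < s | r != j) (nu r)%:E * \sum_(0 <= n < N) f n r <=
            \sum_(r < s | r != j) (nu r)%:E * \sum_(0 <= n < N.+1) f n r.
  apply: lee_sum => r _; rewrite lee_wpmul2l ?stationary_ge0 //.
  by rewrite big_nat_recr //= leeDl.
move: (le_trans step (leeD2l B mono)); rewrite (bigD1 j) //= leeD2rE //.
by apply/sum_fin_numP => r _ _; rewrite fin_numM.
Qed.

Lemma taboo_series_fin : B < +oo -> \sum_(n <oo) f n j < +oo.
Proof.
move=> B_fin; have nuj_gt0 := stationary_gt0 j.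
have : \sum_(n <oo) f n j <= ((nu j)^-1)%:E * B.
  apply: nneseries_ub => // N.
  by rewrite lee_pdivlMl //; exact: taboo_partial_ub.
move/le_lt_trans; apply; apply: lte_mul_pinfty => //.
by rewrite lee_fin invr_ge0 ltW.
Qed.

Lemma taboo_series_fin_all : \sum_(n <oo) f n j < +oo ->
  forall r, \sum_(n <oo) f n r < +oo.
Proof.
move=> xj_fin; apply: (irreducible_taboo_ind j (fun i => _ < +oo)) => //.
move=> i r xi_fin rj pir_gt0; rewrite ltey; apply: contraTneq xi_fin => xr.
have : p i r * \sum_(n <oo) f n r <= \sum_(n <oo) f n i.
  rewrite [leRHS]series_eq; apply: le_trans (leeDr _ (b_ge0 i)).
  apply: (lee_sum_term r) => // r' _.
  by rewrite mule_ge0 ?ptrans_ge0 ?nneseries_ge0.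
by rewrite xr gt0_muley // leye_eq => /eqP ->; rewrite ltxx.
Qed.

Theorem taboo_seriesE : \sum_(n <oo) f n j = B * ((nu j)^-1)%:E.
Proof.
have nuj_gt0 := stationary_gt0 j.
have [xj_fin | ] := boolP (\sum_(n <oo) f n j < +oo); last first.
  rewrite ltey negbK => /eqP xj; rewrite xj.
  have -> : B = +oo.
    by apply/eqP; rewrite -leye_eq leNgt; apply/negP => /taboo_series_fin; rewrite xj ltxx.
  by rewrite gt0_mulye // lte_fin invr_gt0.
have x_ge0 r : 0 <= \sum_(n <oo) f n r by rewrite nneseries_ge0.
have rest_fin : \sum_(r < s | r != j) (nu r)%:E * \sum_(n <oo) f n r \is a fin_num.
  apply/sum_fin_numP => r _ _; rewrite fin_numM // ge0_fin_numE //.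
  exact: taboo_series_fin_all.
have : \sum_(i < s) (nu i)%:E * \sum_(n <oo) f n i
       = B + \sum_(r < s | r != j) (nu r)%:E * \sum_(n <oo) f n r.
  rewrite -(stationary_sum (fun r => r != j)) // -big_split /=.
  by apply: eq_bigr => i _; rewrite series_eq ge0_muleDr // sume_ge0 // => r _;
    rewrite mule_ge0 ?ptrans_ge0.
rewrite (bigD1 j) //=.
move/(congr1 (fun x => x - \sum_(r < s | r != j) (nu r)%:E * \sum_(n <oo) f n r)).
rewrite !addeK // => <-.
by rewrite muleAC -EFinM mulfV ?mul1e // gt_eqF.
Qed.

End taboo_equation.

Section return_time_moments.
Hypothesis herg : ergodic q.
Variables (u : 'I_d) (j : 'I_s).
Local Notation Q := (step_moment q u).
Local Notation M := (return_moment q u j).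
Local Notation M_upto := (return_moment_upto q u j).

Lemma step_moment0 i r : Q 0 i r = p i r.
Proof. by rewrite step_moment_esum //; apply: eq_esum => k _; rewrite mule1. Qed.

Lemma m2E i : m2 q u i = \sum_(r < s) Q 2 i r.
Proof. by apply: eq_bigr => r _; rewrite step_moment_esum. Qed.

Lemma retfinE i : retfin q u i j = M 0 i.
Proof.
by rewrite -moment_retdist //; apply: eq_eseriesr => t _; rewrite mul1e.
Qed.

Lemma mu1E i : retfin q u i j = 1 -> mu1 q u i j = M 1 i.
Proof. by move=> fin1; rewrite /mu1 fin1 eqxx -moment_retdist. Qed.

Lemma mu2E i : retfin q u i j = 1 -> mu2 q u i j = M 2 i.
Proof. by move=> fin1; rewrite /mu2 fin1 eqxx -moment_retdist. Qed.

Lemma m1_ge0 i r : 0 <= m1 q u i r.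
Proof.
rewrite /m1; case: ifP => // _; rewrite mule_ge0 //.
  by apply: esum_ge0 => k _; rewrite mule_ge0 ?lee_fin.
by rewrite lee_fin invr_ge0 fine_ge0 // esum_ge0 // => k _; rewrite lee_fin.
Qed.

Lemma m2_ge0 i : 0 <= m2 q u i.
Proof. by rewrite m2E sume_ge0 // => r _; exact: step_moment_ge0. Qed.

Lemma mu1_ge0 i : 0 <= mu1 q u i j.
Proof.
rewrite /mu1; case: ifP => // _; apply: nneseries_ge0 => t _ _.
by rewrite mule_ge0 ?lee_fin // nneseries_ge0 // => n _ _; exact: fpass_ge0.
Qed.

Lemma step_moment1 i r : Q 1 i r = p i r * m1 q u i r.
Proof.
rewrite step_moment_esum // /m1; under eq_esum => k _ do rewrite expn1.
have [p0 | p_neq0] := eqVneq (p i r) 0.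
  rewrite p0 mul0e; apply: esum1 => k _.
  suff -> : q i r k = 0%R by rewrite mul0e.
  have : (q i r k)%:E <= p i r.
    by apply: esum_ge; exists [set k]; [split; [exact: finite_set1|] | rewrite fsbig_set1].
  by rewrite p0 lee_fin => qk_le0; apply/eqP; rewrite eq_le qk_le0 q_ge0.
rewrite -[in RHS](fineK (ptrans_fin i r)) muleCA -EFinM mulfV ?mule1 //.
by apply: contra_neq p_neq0 => fine0; rewrite -(fineK (ptrans_fin i r)) fine0.
Qed.

Lemma return_moment_upto0_le1 N i : M_upto 0 N i <= 1.
Proof.
elim: N i => [|N IHN] i; first by rewrite /return_moment_upto big_geq.
rewrite return_moment_uptoS // first_step0 step_moment0 -(ptrans_sum1 i) [leRHS](bigD1 j) //=.
apply: leeD2l; apply: lee_sum => r _; rewrite step_moment0.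
by rewrite -[leRHS]mule1 lee_wpmul2l ?ptrans_ge0.
Qed.

Lemma return_moment0_eq1 i : M 0 i = 1.
Proof.
apply: (taboo_harmonic_eq1 j) => {i} [i|i|//|i].
- exact: return_moment_ge0.
- apply: nneseries_ub => [n|N]; first exact: passage_moment_ge0.
  exact: return_moment_upto0_le1.
- by rewrite -retfinE; exact: (herg u j).1.
- by rewrite return_momentE // first_step0 step_moment0; under eq_bigr do rewrite step_moment0.
Qed.

Lemma retfin_eq1 i : retfin q u i j = 1.
Proof. by rewrite retfinE return_moment0_eq1. Qed.

Definition return_moment2_source i :=
  \sum_(r < s) Q 2 i r + 2%:E * \sum_(r < s | r != j) Q 1 i r * M 1 r.

Lemma return_moment2_source_ge0 i : 0 <= return_moment2_source i.
Proof.
rewrite adde_ge0 ?mule_ge0 ?sume_ge0 // => r _.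
  exact: step_moment_ge0.
by rewrite mule_ge0 ?step_moment_ge0 ?return_moment_ge0.
Qed.

Lemma return_moment2E i :
  M 2 i = return_moment2_source i + \sum_(r < s | r != j) p i r * M 2 r.
Proof.
rewrite return_momentE // first_step2 /return_moment2_source.
rewrite [\sum_(r < s) Q 2 i r](bigD1 j) //= -!addeA.
congr (_ + _); rewrite !big_split /= -addeA; congr (_ + _).
  by apply: eq_bigr => r _; rewrite return_moment0_eq1 mule1.
rewrite ge0_sume_distrr => [|r _]; last by rewrite mule_ge0 ?step_moment_ge0 ?return_moment_ge0.
by congr (_ + _); apply: eq_bigr => r _; rewrite ?muleA ?step_moment0.
Qed.

Lemma return_moment_upto2S_le N i : M_upto 2 N.+1 i <=
  return_moment2_source i + \sum_(r < s | r != j) p i r * M_upto 2 N r.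
Proof.
rewrite return_moment_uptoS // first_step2 /return_moment2_source.
rewrite [\sum_(r < s) Q 2 i r](bigD1 j) //= -!addeA.
apply: leeD2l; rewrite !big_split /= -addeA; apply: leeD.
  apply: lee_sum => r _; rewrite -[leRHS]mule1 lee_wpmul2l ?step_moment_ge0 //.
  exact: return_moment_upto0_le1.
rewrite ge0_sume_distrr => [|r _]; last by rewrite mule_ge0 ?step_moment_ge0 ?return_moment_ge0.
apply: leeD; apply: lee_sum => r _; last by rewrite step_moment0.
rewrite -!muleA lee_wpmul2l // lee_wpmul2l ?step_moment_ge0 //.
by apply: nneseries_lim_ge => n _ _; exact: passage_moment_ge0.
Qed.

Lemma return_moment2_sourceE :
  \sum_(i < s) (nu i)%:E * return_moment2_source i =
  \sum_(i < s) (nu i)%:E * m2 q u i +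
  2%:E * \sum_(i < s) \sum_(r < s | r != j) (nu i)%:E * p i r * m1 q u i r * mu1 q u r j.
Proof.
have QM_ge0 i r : 0 <= Q 1 i r * M 1 r by rewrite mule_ge0 ?step_moment_ge0 ?return_moment_ge0.
have QM_sum_ge0 i : 0 <= \sum_(r < s | r != j) Q 1 i r * M 1 r.
  by apply: sume_ge0 => r _; exact: QM_ge0.
rewrite ge0_sume_distrr => [|i _]; last first.
  by rewrite sume_ge0 // => r _; rewrite !mule_ge0 ?stationary_ge0 ?ptrans_ge0 ?m1_ge0 ?mu1_ge0.
rewrite -big_split; apply: eq_bigr => i _ /=.
have Q2_ge0 : 0 <= \sum_(r < s) Q 2 i r by apply: sume_ge0 => r _; exact: step_moment_ge0.
rewrite ge0_muleDr ?mule_ge0 //.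
rewrite m2E muleCA; congr (_ + (_ * _)).
rewrite ge0_sume_distrr => [|r _]; last exact: QM_ge0.
by apply: eq_bigr => r _; rewrite step_moment1 mu1E ?retfin_eq1 // !muleA.
Qed.

Theorem return_moment2_diagE :
  M 2 j = (\sum_(i < s) (nu i)%:E * return_moment2_source i) * ((nu j)^-1)%:E.
Proof.
apply: taboo_seriesE => [i|n i|i|N i].
- exact: return_moment2_source_ge0.
- exact: passage_moment_ge0.
- exact: return_moment2E.
- exact: return_moment_upto2S_le.
Qed.

End return_time_moments.

End irreducible_chain.

Theorem corollary5 (R : realType) (s d : nat) (q : 'I_s -> 'I_s -> time d -> R)
  (nu : 'I_s -> R) :
  is_kernel q -> irreducible q -> ergodic q -> stationary q nu ->
  forall (j : 'I_s) (u : 'I_d),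
    mu2 q u j j =
      (\sum_(i < s) (nu i)%:E * m2 q u i) * ((nu j)^-1)%:E
      + 2%:E * ((\sum_(i < s) \sum_(r < s | r != j)
                  (nu i)%:E * ptrans q i r * m1 q u i r * mu1 q u r j)
                * ((nu j)^-1)%:E).
Proof.
move=> hq hirr herg hnu j u.
rewrite (mu2E hq) ?(retfin_eq1 hq hirr herg) // (return_moment2_diagE hq hirr hnu herg).
rewrite (return_moment2_sourceE hq hirr hnu herg) ge0_muleDl -?muleA //.
  by apply: sume_ge0 => i _; rewrite mule_ge0 ?(stationary_ge0 hnu) ?(m2_ge0 hq).
rewrite mule_ge0 // !sume_ge0 // => i _; apply: sume_ge0 => r _.
by rewrite !mule_ge0 ?(stationary_ge0 hnu) ?(ptrans_ge0 hq) ?(m1_ge0 hq) ?(mu1_ge0 hq).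
Qed.
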